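(* Let $\mathcal{A}$ be the ring of adeles of $\mathbb{Q}$, with $\mathbb{Q}^*$ acting by multiplication via the diagonal embedding, and let $q:\mathcal{A}\to\mathcal{Q}(\mathcal{A}/\mathbb{Q}^* )$ be the quasi-orbit map. Then for $a\in\mathcal{A}$, the quasi-orbit $q(a)=\{b\in\mathcal{A}:\overline{\mathbb{Q}^*b}=\overline{\mathbb{Q}^*a}\}$ equals $\mathbb{Q}^*a$ if $a$ is invertible, and equals $\{b\in\mathcal{A}\setminus\mathcal{A}^*: \text{for all } p\in\mathcal{P}\cup\{\infty\},\ b_p=0 \iff a_p=0\}$ if $a$ is not invertible.
   Context: $\mathcal{P}$ is the set of primes. $\mathcal{A}=\mathcal{A}_f\times\mathbb{R}$ with $\mathcal{A}_f$ the restricted product of the $\mathbb{Q}_p$ with respect to the $\mathbb{Z}_p$; $\mathcal{A}$ has the product topology, componentwise operations, and $\mathbb{Q}$ embedded diagonally. Write $a=((a_p)_{p\in\mathcal{P}},a_\infty)$. $\mathcal{A}^*$ is the group of invertible adeles (all $a_p\ne0$, $a_\infty\ne0$, $a_p\in\mathbb{Z}_p^*$ for almost all $p$). The quasi-orbit space $\mathcal{Q}(\mathcal{A}/\mathbb{Q}^* )$ is the quotient of $\mathcal{A}$ by $a\sim b\iff\overline{\mathbb{Q}^*a}=\overline{\mathbb{Q}^*b}$. *)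

From HB Require Import structures.
From mathcomp Require Import all_boot all_order all_algebra.
From mathcomp Require Import reals.
Set Implicit Arguments. Unset Strict Implicit. Unset Printing Implicit Defensive.
Import Order.TTheory GRing.Theory Num.Theory.
Local Open Scope ring_scope.

(* [pZ p n r] : the rational r lies in p^n Z_(p), i.e. v_p(r) >= n          *)
Definition pZ (p n : nat) (r : rat) : Prop :=
  exists (a b : int), ~~ (p %| absz b)%N /\
    r = (p ^ n)%N%:R * a%:~R / b%:~R.

(* An element x of Q_p is represented by its family of closed balls
   x + p^n Z_p (n >= 0), intersected with the dense subfield Q: each
   [qp_ball x n] is a coset of p^n Z_(p) in Q, and the family is nested.
   (Nested families of such cosets correspond bijectively to points of the
   completion Q_p of Q for the p-adic absolute value.) *)
Record Qp (p : nat) := MkQp {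
  qp_ball : nat -> rat -> Prop;
  qp_coset : forall n, exists r, forall y, qp_ball n y <-> pZ p n (y - r);
  qp_nested : forall n y, qp_ball n.+1 y -> qp_ball n y
}.

Definition qp_is0 p (x : Qp p) : Prop :=
  forall n y, qp_ball x n y <-> pZ p n y.

(* x lies in the same coset of p^n Z_p as x', i.e. x - x' \in p^n Z_p. *)
Definition qp_close p (n : nat) (x x' : Qp p) : Prop :=
  forall y, qp_ball x n y <-> qp_ball x' n y.

Definition qp_int p (x : Qp p) : Prop :=
  forall y, qp_ball x 0 y <-> pZ p 0 y.

Definition qp_unit p (x : Qp p) : Prop :=
  qp_int x /\ ~ qp_ball x 1 0.

Definition qp_smul p (q : rat) (x y : Qp p) : Prop :=
  forall n r, qp_ball y n r <->
    (forall m, exists z, qp_ball x m z /\ pZ p n (r - q * z)).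

Definition prime_t := {p : nat | prime p}.

Record adele (R : realType) := MkAdele {
  ad_fin : forall p : prime_t, Qp (val p);
  ad_inf : R;
  ad_restricted : exists N : nat, forall p : prime_t,
      (N < val p)%N -> qp_int (ad_fin p)
}.

Definition ad_invertible (R : realType) (a : adele R) : Prop :=
  (forall p, ~ qp_is0 (ad_fin a p)) /\ ad_inf a != 0 /\
  exists N : nat, forall p : prime_t, (N < val p)%N -> qp_unit (ad_fin a p).

Definition ad_orbit (R : realType) (a b : adele R) : Prop :=
  exists q : rat, q != 0 /\
    (forall p : prime_t, qp_smul q (ad_fin a p) (ad_fin b p)) /\
    ad_inf b = ratr q * ad_inf a.

(* Basic neighbourhoods of b in A = A_f x R (restricted product topology on
   A_f, product topology on A): for a finite set F of primes, n in N and
   eps > 0,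
     { x | x_p - b_p \in p^n Z_p (p \in F), x_p - b_p \in Z_p (p \notin F),
           |x_inf - b_inf| < eps }.
   These form a neighbourhood basis at b. *)
Definition ad_nbhd (R : realType) (b : adele R) (F : seq prime_t) (n : nat)
    (eps : R) (x : adele R) : Prop :=
  (forall p, p \in F -> qp_close n (ad_fin x p) (ad_fin b p)) /\
  (forall p, p \notin F -> qp_close 0 (ad_fin x p) (ad_fin b p)) /\
  `|ad_inf x - ad_inf b| < eps.

Definition ad_closure (R : realType) (S : adele R -> Prop) (c : adele R) : Prop :=
  forall (F : seq prime_t) (n : nat) (eps : R), 0 < eps ->
    exists x, S x /\ ad_nbhd c F n eps x.

Definition quasi_orbit (R : realType) (a b : adele R) : Prop :=
  forall c, ad_closure (ad_orbit b) c <-> ad_closure (ad_orbit a) c.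

(* If a is invertible, only finitely many primes see a_p outside Z_p^*, and at
   those a_p is bounded away from 0; hence if q1 a and q2 a are both close
   enough to some c, then q1 - q2 is integral at every prime and, comparing
   the real coordinates, smaller than 1: so q1 = q2, the orbit Q^* a is closed,
   and the quasi-orbit of a is its orbit.
   If a is not invertible, every c vanishing wherever a does lies in the closure
   of Q^* a: the finitely many p-adic conditions of a neighbourhood prescribe q
   modulo prime powers (Chinese remainders over Q), and the real condition is
   then met by moving q in steps P k / s^j, where s is a prime with a_s = 0 or,
   a being non-invertible, a large prime with a_s in s Z_s.  Conversely the
   closure of Q^* a only contains adeles vanishing where a does, so the
   quasi-orbit of a non-invertible a is determined by its zero coordinates. *)

From mathcomp Require Import all_boot all_order all_algebra.
From mathcomp Require Import reals.
From mathcomp Require Import ring lra zify.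
From Stdlib Require Import Classical.
Import Order.TTheory GRing.Theory Num.Theory.
Local Open Scope ring_scope.
Set Implicit Arguments. Unset Strict Implicit.

Section PadicIntegrality.
Variable p : nat.
Hypothesis p_pr : prime p.

Lemma pndvd_neq0 (b : int) : ~~ (p %| absz b)%N -> b != 0.
Proof. by apply: contra => /eqP ->; rewrite dvdn0. Qed.

Lemma pndvdM (b b' : int) :
  ~~ (p %| absz b)%N -> ~~ (p %| absz b')%N -> ~~ (p %| absz (b * b')%R)%N.
Proof. by move=> hb hb'; rewrite abszM Euclid_dvdM // negb_or hb hb'. Qed.

Lemma pndvd1 : ~~ (p %| 1)%N.
Proof. by rewrite dvdn1 gtn_eqF ?prime_gt1. Qed.

Lemma pexpn_neq0 n : ((p ^ n)%N%:R : rat) != 0.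
Proof. by rewrite pnatr_eq0 -lt0n expn_gt0 prime_gt0. Qed.

Lemma pZ0 n : pZ p n 0.
Proof. by exists 0, 1; split; [exact: pndvd1 | rewrite mulr0 mul0r]. Qed.

Lemma pZD n r s : pZ p n r -> pZ p n s -> pZ p n (r + s).
Proof.
move=> [a [b [hb ->]]] [a' [b' [hb' ->]]].
exists (a * b' + a' * b), (b * b'); split; first exact: pndvdM.
have b0 : b%:~R != 0 :> rat by rewrite intr_eq0 pndvd_neq0.
have b0' : b'%:~R != 0 :> rat by rewrite intr_eq0 pndvd_neq0.
by rewrite !rmorphD !rmorphM /=; field; rewrite b0 b0'.
Qed.

Lemma pZN n r : pZ p n r -> pZ p n (- r).
Proof.
by move=> [a [b [hb ->]]]; exists (- a), b; rewrite rmorphN /= mulrN mulNr.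
Qed.

Lemma pZ_subr_sym n r s : pZ p n (r - s) -> pZ p n (s - r).
Proof. by move=> /pZN; rewrite opprB. Qed.

Lemma pZ_subr_trans n r s t : pZ p n (r - s) -> pZ p n (s - t) -> pZ p n (r - t).
Proof. by move=> hrs hst; rewrite -(subrKA s); apply: pZD. Qed.

Lemma pZ_leq m n r : (m <= n)%N -> pZ p n r -> pZ p m r.
Proof.
move=> /subnKC eq_n [a [b [hb ->]]].
exists ((p ^ (n - m))%N%:Z * a), b; split => //.
by rewrite -{1}eq_n expnD natrM rmorphM /= -!mulrA.
Qed.

Lemma pZM n m r s : pZ p n r -> pZ p m s -> pZ p (n + m) (r * s).
Proof.
move=> [a [b [hb ->]]] [a' [b' [hb' ->]]].
exists (a * a'), (b * b'); split; first exact: pndvdM.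
have b0 : b%:~R != 0 :> rat by rewrite intr_eq0 pndvd_neq0.
have b0' : b'%:~R != 0 :> rat by rewrite intr_eq0 pndvd_neq0.
by rewrite expnD natrM !rmorphM /=; field; rewrite b0 b0'.
Qed.

Lemma pZ_intr (z : int) : pZ p 0 z%:~R.
Proof. by exists z, 1; split; [exact: pndvd1 | rewrite expn0 mul1r divr1]. Qed.

Lemma pZ_natr (k : nat) : pZ p 0 k%:R.
Proof. exact: (pZ_intr k). Qed.

Lemma pZ_expn n : pZ p n (p ^ n)%N%:R.
Proof. by exists 1, 1; split; [exact: pndvd1 | rewrite mulr1 divr1]. Qed.

Lemma pZ_divX n k r : pZ p (n + k) r -> pZ p n (r / (p ^ k)%N%:R).
Proof.
move=> [a [b [hb ->]]]; exists a, b; split => //.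
have b0 : b%:~R != 0 :> rat by rewrite intr_eq0 pndvd_neq0.
by rewrite expnD natrM; field; rewrite b0 pexpn_neq0.
Qed.

Lemma pZ_mull_int c n s : pZ p 0 c -> pZ p n s -> pZ p n (c * s).
Proof. exact: pZM. Qed.

Lemma pZ_mull_scaled c K n s :
  pZ p 0 (c * (p ^ K)%N%:R) -> pZ p (n + K) s -> pZ p n (c * s).
Proof.
move=> hc /pZ_divX hs; have := pZ_mull_int hc hs.
by congr pZ; field; rewrite pexpn_neq0.
Qed.

Lemma pZ_numden n r : pZ p n r <->
  r = 0 \/ ((p ^ n %| absz (numq r)) && ~~ (p %| absz (denq r)))%N.
Proof.
split=> [[a [b [hb hr]]] | [-> | /andP [hn hd]]]; last 2 first.
- exact: pZ0.
- exists (numq r %/ (p ^ n)%N%:Z)%Z, (denq r); split => //.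
  have hdz : ((p ^ n)%N%:Z %| numq r)%Z by rewrite dvdzE absz_nat.
  by rewrite -[r in LHS]divq_num_den -{1}(divzK hdz) rmorphM /= [X in X / _ = _]mulrC.
have [-> | r0] := eqVneq r 0; [by left | right].
have b0 : b%:~R != 0 :> rat by rewrite intr_eq0 pndvd_neq0.
have eq_md : numq r * b = (p ^ n)%N%:Z * a * denq r.
  apply: (@intr_inj rat); rewrite !rmorphM /= numqE hr.
  by field; rewrite b0.
have eq_abs : (absz (numq r) * absz b = p ^ n * absz a * absz (denq r))%N.
  by rewrite -abszM eq_md !abszM.
apply/andP; split.
  have cop : coprime (p ^ n) (absz b) by rewrite coprimeXl // prime_coprime.
  by rewrite -(Gauss_dvdl _ cop) eq_abs -mulnA dvdn_mulr.
apply: contra hb => hd.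
have cop : coprime (absz (denq r)) (absz (numq r)) by rewrite coprime_sym coprime_num_den.
have : (absz (denq r) %| absz (numq r) * absz b)%N by rewrite eq_abs dvdn_mull.
by rewrite (Gauss_dvdr _ cop) => /(dvdn_trans hd).
Qed.

Lemma denq_pfactor r : exists m j, ~~ (p %| m)%N /\ denq r = (m * p ^ j)%N%:Z.
Proof.
have dpos : (0 < absz (denq r))%N by rewrite absz_gt0 gt_eqF // denq_gt0.
have [m cop eq_d] := pfactor_coprime p_pr dpos.
exists m, (logn p (absz (denq r))); split; first by rewrite -prime_coprime.
by rewrite -eq_d gtz0_abs // denq_gt0.
Qed.

Lemma pZ_scale_int r : exists K, pZ p 0 (r * (p ^ K)%N%:R).
Proof.
have [m [j [hm eq_d]]] := denq_pfactor r.
exists j, (numq r), m; split => //.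
have m0 : (m%:R : rat) != 0 by rewrite pnatr_eq0; apply: contraNneq hm => ->.
rewrite -{1}[r]divq_num_den eq_d expn0 mul1r -!pmulrn natrM.
by field; rewrite m0 pexpn_neq0.
Qed.

Lemma pZ_inv_pdenq M z : (p %| absz (denq z))%N -> pZ p 1 ((p ^ M)%N%:R / z).
Proof.
move=> hd.
have hn : ~~ (p %| absz (numq z))%N.
  apply/negP => hn; have : (p %| gcdn (absz (numq z)) (absz (denq z)))%N.
    by rewrite dvdn_gcd hn hd.
  by rewrite (eqP (coprime_num_den z)); apply/negP/pndvd1.
have n0 : (numq z)%:~R != 0 :> rat by rewrite intr_eq0 pndvd_neq0.
have [d eq_d] : exists d, denq z = (d * p)%N%:Z.
  by exists (absz (denq z) %/ p)%N; rewrite divnK // gtz0_abs.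
exists ((p ^ M)%N%:Z * d%:Z), (numq z); split => //.
rewrite -[z in _ / z]divq_num_den invfM invrK eq_d rmorphM /= -!pmulrn !natrM.
by field; rewrite n0.
Qed.

Lemma pZ_inv_pnumq M z : z != 0 -> ~~ (p %| absz (denq z))%N ->
  ~~ (p ^ M %| absz (numq z))%N -> pZ p 1 ((p ^ M)%N%:R / z).
Proof.
move=> z0 hd hM.
have npos : (0 < absz (numq z))%N by rewrite absz_gt0 numq_eq0.
have [u cop eq_n] := pfactor_coprime p_pr npos.
set j := logn p (absz (numq z)) in eq_n.
have jM : (j < M)%N.
  by rewrite ltnNge; apply: contra hM => hjM; rewrite eq_n dvdn_mull // dvdn_exp2l.
have hdz : ((p ^ j)%N%:Z %| numq z)%Z by rewrite dvdzE absz_nat eq_n dvdn_mull.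
set u' := (numq z %/ (p ^ j)%N%:Z)%Z.
have eq_u : numq z = u' * (p ^ j)%N%:Z by rewrite divzK.
have abs_u : absz u' = u.
  apply/eqP; rewrite -(@eqn_pmul2r (p ^ j)) ?expn_gt0 ?prime_gt0 //.
  by rewrite -eq_n eq_u abszM.
have u0 : u'%:~R != 0 :> rat.
  by rewrite intr_eq0; apply: contraTneq npos => u0; rewrite eq_u u0.
exists ((p ^ (M - j).-1)%N%:Z * denq z), u'; split.
  by rewrite abs_u -prime_coprime.
have eq_M : (p ^ M = p ^ 1 * p ^ (M - j).-1 * p ^ j)%N.
  by rewrite -!expnD add1n prednK ?subn_gt0 // subnK // ltnW.
rewrite -[z in _ / z]divq_num_den invfM invrK eq_u !rmorphM /= eq_M !natrM.
by field; rewrite u0 pexpn_neq0.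
Qed.

Lemma pZ_inv M z : ~ pZ p M z -> pZ p 1 ((p ^ M)%N%:R / z).
Proof.
rewrite pZ_numden => hz.
have [hd | hd] := boolP (p %| absz (denq z))%N; first exact: pZ_inv_pdenq.
apply: pZ_inv_pnumq => //; first by apply/eqP => z0; apply: hz; left.
by apply/negP => hM; apply: hz; right; rewrite hM hd.
Qed.

Lemma pZ_scale_int_leq q K K' :
  (K <= K')%N -> pZ p 0 (q * (p ^ K)%N%:R) -> pZ p 0 (q * (p ^ K')%N%:R).
Proof.
move=> /subnK <- hK; rewrite addnC expnD natrM mulrA.
exact: pZ_mull_int hK (pZ_natr _).
Qed.

(* Bezout between the prime-to-p part of the denominator of s and a power of p. *)
Lemma pZ_approx_away s E : exists h, pZ p E (h - s) /\
  forall l, prime l -> l != p -> pZ l 0 h.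
Proof.
have [m [j [hm eq_d]]] := denq_pfactor s.
have m0 : (m%:R : rat) != 0 by rewrite pnatr_eq0; apply: contraNneq hm => ->.
have cop : coprimez m%:Z (p ^ (E + j))%N%:Z.
  by rewrite coprimezE !absz_nat coprime_sym coprimeXl // prime_coprime.
have [[u v] /= bezout] := coprimezP _ _ cop.
have bezout_rat : u%:~R * m%:R + v%:~R * (p ^ (E + j))%N%:R = 1 :> rat.
  by have := congr1 (fun x : int => x%:~R : rat) bezout; rewrite rmorphD !rmorphM.
exists ((numq s * u)%:~R / (p ^ j)%N%:R); split.
  exists (- (numq s * v)), m%:Z; split => //.
  have eq_u : u%:~R = (1 - v%:~R * (p ^ (E + j))%N%:R) / m%:R :> rat.
    by apply/(canRL (mulfK m0))/eqP; rewrite eq_sym subr_eq bezout_rat.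
  rewrite -{2}[s]divq_num_den eq_d -pmulrn rmorphN !rmorphM /= eq_u !expnD !natrM.
  by field; rewrite m0 !pexpn_neq0.
move=> l l_pr lp; exists (numq s * u), (p ^ j)%N%:Z; split; last by rewrite expn0 mul1r.
by rewrite absz_nat Euclid_dvdX // dvdn_prime2 // (negbTE lp).
Qed.

End PadicIntegrality.

Lemma int_of_pZ_all r : (forall l, prime l -> pZ l 0 r) -> r = (numq r)%:~R.
Proof.
move=> hr; suff d1 : denq r = 1 by rewrite numqE d1 mulr1.
have dpos : (0 < absz (denq r))%N by rewrite absz_gt0 gt_eqF // denq_gt0.
have [d_gt1 | d_le1] := ltnP 1 (absz (denq r)); last first.
  by rewrite -[denq r]gtz0_abs ?denq_gt0 //; congr Posz; lia.
have l_pr := pdiv_prime d_gt1.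
have [r0 | /andP [_]] := (pZ_numden l_pr 0 r).1 (hr _ l_pr).
  by move: d_gt1; rewrite r0.
by rewrite pdiv_dvd.
Qed.

Lemma rat_eq0_of_pZ_all d : (forall l, prime l -> pZ l 0 d) -> `|d| < 1 -> d = 0.
Proof.
move=> /int_of_pZ_all ->; rewrite -intr_norm -[1]/(1%:~R) ltr_int => hd.
by have -> : numq d = 0 by lia.
Qed.

Lemma pZ0_of_denq_lt p q : prime p -> (absz (denq q) < p)%N -> pZ p 0 q.
Proof.
move=> p_pr hd; apply/(pZ_numden p_pr); right; rewrite expn0 dvd1n /=.
apply/negP => /dvdn_leq; rewrite absz_gt0 gt_eqF ?denq_gt0 // => /(_ isT).
by rewrite leqNgt hd.
Qed.

Lemma pZ0_inv_of_numq_lt p q : prime p -> (absz (numq q) < p)%N -> q != 0 ->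
  pZ p 0 q^-1.
Proof.
move=> p_pr hn q0; exists (denq q), (numq q); split.
  apply/negP => /dvdn_leq; rewrite absz_gt0 numq_eq0 q0 => /(_ isT).
  by rewrite leqNgt hn.
by rewrite -[q in LHS]divq_num_den invfM invrK expn0 mul1r mulrC.
Qed.

Lemma pZ0_div_expn p s (k : int) j : prime p -> prime s -> p != s ->
  pZ p 0 (k%:~R / (s ^ j)%N%:R).
Proof.
move=> p_pr s_pr ps; exists k, (s ^ j)%N%:Z; split; last by rewrite expn0 mul1r.
by rewrite absz_nat Euclid_dvdX // dvdn_prime2 // (negbTE ps).
Qed.

Section PadicBalls.
Variable p : nat.
Hypothesis p_pr : prime p.
Implicit Types x y w : Qp p.

Lemma qp_ball_ex x n : exists r, qp_ball x n r.
Proof. by have [r hr] := qp_coset x n; exists r; apply/hr; rewrite subrr; apply: pZ0. Qed.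

Lemma qp_ball_sub x n r s : qp_ball x n r -> qp_ball x n s -> pZ p n (r - s).
Proof.
have [t ht] := qp_coset x n => /ht hr /ht hs.
exact: pZ_subr_trans hr (pZ_subr_sym hs).
Qed.

Lemma qp_ballE x n r s : qp_ball x n r -> qp_ball x n s <-> pZ p n (s - r).
Proof.
have [t ht] := qp_coset x n => /ht hr; rewrite ht.
split=> h; first exact: pZ_subr_trans h (pZ_subr_sym hr).
exact: pZ_subr_trans h hr.
Qed.

Lemma qp_ball_leq x m n r : (m <= n)%N -> qp_ball x n r -> qp_ball x m r.
Proof.
move=> /subnK <-; elim: (n - m)%N => [|k IH] //= h.
by apply: IH; apply: qp_nested; rewrite -addSn.
Qed.

Lemma qp_is0P x : qp_is0 x <-> forall n, qp_ball x n 0.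
Proof.
split=> [h0 n | h0 n r]; first by apply/h0; apply: pZ0.
by rewrite (qp_ballE _ (h0 n)) subr0.
Qed.

Lemma qp_close_leq m n x w : (m <= n)%N -> qp_close n x w -> qp_close m x w.
Proof.
move=> hmn hc r; have [s hs] := qp_ball_ex x n.
have hs' : qp_ball w n s by apply/hc.
by rewrite (qp_ballE _ (qp_ball_leq hmn hs)) (qp_ballE _ (qp_ball_leq hmn hs')).
Qed.

Lemma qp_close_sym n x w : qp_close n x w -> qp_close n w x.
Proof. by move=> h r; rewrite h. Qed.

Lemma qp_close_trans n x w y : qp_close n x w -> qp_close n w y -> qp_close n x y.
Proof. by move=> h h' r; rewrite h h'. Qed.

Definition qp_smul_ball q x n r := forall m, exists z, qp_ball x m z /\ pZ p n (r - q * z).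

Lemma qp_smul_ballE q x K n z : pZ p 0 (q * (p ^ K)%N%:R) ->
  qp_ball x (n + K) z -> forall r, qp_smul_ball q x n r <-> pZ p n (r - q * z).
Proof.
move=> hq hz r; split=> [/(_ (n + K)%N) [z' [hz' hr]] | hr m].
  rewrite -(subrKA (q * z')) -mulrBr; apply: (pZD p_pr hr).
  exact: pZ_mull_scaled hq (qp_ball_sub hz' hz).
have [z' hz'] := qp_ball_ex x (maxn m (n + K)).
exists z'; split; first by apply: qp_ball_leq hz'; rewrite leq_maxl.
rewrite -(subrKA (q * z)) -mulrBr; apply: (pZD p_pr hr).
apply: (pZ_mull_scaled p_pr hq); apply: qp_ball_sub hz (qp_ball_leq _ hz').
by rewrite leq_maxr.
Qed.

Lemma qp_smul_ball_coset q x n :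
  exists r0, forall r, qp_smul_ball q x n r <-> pZ p n (r - r0).
Proof.
have [K hK] := pZ_scale_int p_pr q; have [z hz] := qp_ball_ex x (n + K).
by exists (q * z); apply: qp_smul_ballE hK hz.
Qed.

Lemma qp_smul_ball_nested q x n r : qp_smul_ball q x n.+1 r -> qp_smul_ball q x n r.
Proof.
move=> h m; have [z [hz hr]] := h m; exists z; split => //.
exact: pZ_leq (leqnSn n) hr.
Qed.

Definition qp_scale q x : Qp p := MkQp (qp_smul_ball_coset q x) (@qp_smul_ball_nested q x).

Lemma qp_scaleP q x : qp_smul q x (qp_scale q x).
Proof. by []. Qed.

Lemma qp_smulE q x y K n z : qp_smul q x y -> pZ p 0 (q * (p ^ K)%N%:R) ->
  qp_ball x (n + K) z -> forall r, qp_ball y n r <-> pZ p n (r - q * z).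
Proof. by move=> hy hq hz r; rewrite hy; exact: (qp_smul_ballE hq hz r). Qed.

Lemma qp_smul_ball_scaled q x y K n z : qp_smul q x y -> pZ p 0 (q * (p ^ K)%N%:R) ->
  qp_ball x (n + K) z -> qp_ball y n (q * z).
Proof. by move=> hy hq hz; rewrite (qp_smulE hy hq hz) subrr; apply: pZ0. Qed.

Lemma qp_smul_intro q x y : (forall n, exists K z, pZ p 0 (q * (p ^ K)%N%:R) /\
   qp_ball x (n + K) z /\ forall r, qp_ball y n r <-> pZ p n (r - q * z)) ->
  qp_smul q x y.
Proof.
move=> h n r; have [K [z [hq [hz ->]]]] := h n.
exact: iff_sym (qp_smul_ballE hq hz r).
Qed.

Lemma qp_smul1 x : qp_smul 1 x x.
Proof.
apply: qp_smul_intro => n; have [z hz] := qp_ball_ex x (n + 0).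
exists 0%N, z; split; first by rewrite mul1r; apply: (pZ_natr p_pr 1).
by split=> // r; rewrite mul1r; apply: qp_ballE; rewrite addn0 in hz.
Qed.

Lemma qp_smul_comp q q' x y w : qp_smul q x y -> qp_smul q' y w -> qp_smul (q' * q) x w.
Proof.
move=> hy hw; apply: qp_smul_intro => n.
have [K hK] := pZ_scale_int p_pr q; have [K' hK'] := pZ_scale_int p_pr q'.
have [z hz] := qp_ball_ex x (n + K' + K).
exists (K' + K)%N, z; split.
  have := pZM p_pr hK' hK; rewrite add0n expnD natrM.
  by congr pZ; ring.
split; first by rewrite addnA.
by move=> r; rewrite (qp_smulE hw hK' (qp_smul_ball_scaled hy hK hz)) mulrA.
Qed.

Lemma qp_smulV q x y : q != 0 -> qp_smul q x y -> qp_smul q^-1 y x.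
Proof.
move=> q0 hy; apply: qp_smul_intro => n.
have [K hK] := pZ_scale_int p_pr q; have [K' hK'] := pZ_scale_int p_pr q^-1.
have [z hz] := qp_ball_ex x (n + K' + K).
exists K', (q * z); split => //; split; first exact: qp_smul_ball_scaled hy hK hz.
move=> r; rewrite mulrA mulVf // mul1r; apply: qp_ballE.
by apply: qp_ball_leq hz; rewrite -addnA leq_addr.
Qed.

Lemma qp_smul_is0 q x y : qp_is0 x -> qp_smul q x y -> qp_is0 y.
Proof.
move=> /qp_is0P hx hy; apply/qp_is0P => n; have [K hK] := pZ_scale_int p_pr q.
by have := qp_smul_ball_scaled hy hK (hx _); rewrite mulr0.
Qed.

Lemma qp_smul_int q x y : pZ p 0 q -> qp_int x -> qp_smul q x y -> qp_int y.
Proof.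
move=> hq hx hy r; have hq' : pZ p 0 (q * (p ^ 0)%N%:R) by rewrite mulr1.
have hx0 : qp_ball x (0 + 0) 0 by apply/hx; apply: pZ0.
by rewrite (qp_smulE hy hq' hx0) mulr0 subr0.
Qed.

Lemma qp_smul_unit q x y : q != 0 -> pZ p 0 q -> pZ p 0 q^-1 -> qp_unit x ->
  qp_smul q x y -> qp_unit y.
Proof.
move=> q0 hq hqV [hx hx1] hy; split; first exact: qp_smul_int hq hx hy.
move=> hy1; apply: hx1.
have hq' : pZ p 0 (q * (p ^ 0)%N%:R) by rewrite mulr1.
have [z hz] := qp_ball_ex x (1 + 0).
move: hy1; rewrite (qp_smulE hy hq' hz) sub0r => /pZN; rewrite opprK => hqz.
have := pZ_mull_int p_pr hqV hqz; rewrite mulKf // => hz1.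
by rewrite (qp_ballE _ hz) sub0r; apply: pZN.
Qed.

End PadicBalls.

Lemma norm_lt_all_eq0 (R : numDomainType) (r : R) :
  (forall e, 0 < e -> `|r| < e) -> r = 0.
Proof.
move=> h; apply/eqP; apply: contraT => r0.
by have := h `|r|; rewrite normr_gt0 r0 ltxx => /(_ isT).
Qed.

Section AdeleOrbits.
Variable R : realType.
Implicit Types a b c x : adele R.

Definition ad_smul q a b :=
  (forall p : prime_t, qp_smul q (ad_fin a p) (ad_fin b p)) /\
  ad_inf b = ratr q * ad_inf a.

Lemma ad_scale_restricted q a : exists N : nat, forall p : prime_t,
  (N < val p)%N -> qp_int (qp_scale (valP p) q (ad_fin a p)).
Proof.
have [N hN] := ad_restricted a; exists (N + absz (denq q))%N => p hp.
apply: (qp_smul_int (valP p)) (qp_scaleP _ _ _); last by apply: hN; lia.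
by apply: pZ0_of_denq_lt (valP p) _; lia.
Qed.

Definition ad_scale q a : adele R :=
  @MkAdele R (fun p => qp_scale (valP p) q (ad_fin a p)) (ratr q * ad_inf a)
    (ad_scale_restricted q a).

Lemma ad_scaleP q a : ad_smul q a (ad_scale q a).
Proof. by split=> // p; apply: qp_scaleP. Qed.

Lemma ad_orbit_refl a : ad_orbit a a.
Proof.
exists 1; split; first exact: oner_neq0.
by split=> [p | ]; [apply: qp_smul1 (valP p) _ | rewrite rmorph1 mul1r].
Qed.

Lemma ad_orbit_trans a b c : ad_orbit a b -> ad_orbit b c -> ad_orbit a c.
Proof.
move=> [q [q0 [hb eb]]] [q' [q0' [hc ec]]].
exists (q' * q); split; first by rewrite mulf_neq0.
split=> [p | ]; first exact: (qp_smul_comp (valP p) (hb p) (hc p)).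
by rewrite ec eb rmorphM mulrA.
Qed.

Lemma ad_orbit_sym a b : ad_orbit a b -> ad_orbit b a.
Proof.
move=> [q [q0 [hb eb]]]; exists q^-1; split; first by rewrite invr_eq0.
split=> [p | ]; first exact: (qp_smulV (valP p) q0 (hb p)).
by rewrite eb fmorphV mulKf // fmorph_eq0.
Qed.

Lemma ad_closure_self (S : adele R -> Prop) c : S c -> ad_closure S c.
Proof. by move=> hc F n e e_gt0; exists c; do !split => // *; rewrite subrr normr0. Qed.

Lemma ad_closure_sub (S S' : adele R -> Prop) c : (forall x, S x -> S' x) ->
  ad_closure S c -> ad_closure S' c.
Proof.
move=> sub_S hc F n e e_gt0; have [x [hx hn]] := hc F n e e_gt0.
by exists x; split => //; apply: sub_S.
Qed.

Lemma quasi_orbit_of_orbit a b : ad_orbit a b -> quasi_orbit a b.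
Proof.
move=> hab c; split; apply: ad_closure_sub => x hx; first exact: ad_orbit_trans hab hx.
exact: ad_orbit_trans (ad_orbit_sym hab) hx.
Qed.

(* Multiplication by q preserves units at the primes dividing neither the
   numerator nor the denominator of q. *)
Lemma ad_invertible_orbit a b : ad_orbit b a -> ad_invertible b -> ad_invertible a.
Proof.
move=> [q [q0 [ha ea]]] [hb0 [hbinf [N hN]]]; split; [|split].
- move=> p ha0; apply: (hb0 p).
  exact: (qp_smul_is0 (valP p) ha0 (qp_smulV (valP p) q0 (ha p))).
- by rewrite ea mulf_neq0 // fmorph_eq0.
exists (N + absz (numq q) + absz (denq q))%N => p hp.
apply: (qp_smul_unit (valP p) q0 _ _ (hN p _) (ha p)); last by lia.
  by apply: pZ0_of_denq_lt (valP p) _; lia.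
by apply: pZ0_inv_of_numq_lt (valP p) _ q0; lia.
Qed.

Definition ad_zeros_sub a c :=
  (forall p, qp_is0 (ad_fin a p) -> qp_is0 (ad_fin c p)) /\
  (ad_inf a = 0 -> ad_inf c = 0).

Lemma ad_closure_orbit_zeros a c : ad_closure (ad_orbit a) c -> ad_zeros_sub a c.
Proof.
move=> hc; split=> [p ha0 n r | ainf0].
  have [x [[q [_ [hx _]]] [hF _]]] := hc [:: p] n 1 ltr01.
  by rewrite -(hF p (mem_head _ _)) (qp_smul_is0 (valP p) ha0 (hx p)).
apply: norm_lt_all_eq0 => e e_gt0.
have [x [[q [_ [_ ex]]] [_ [_ hinf]]]] := hc [::] 0%N e e_gt0.
by move: hinf; rewrite ex ainf0 mulr0 sub0r normrN.
Qed.

Lemma ad_nbhd_weaken c F F' n n' e e' x : ad_nbhd c F' n' e' x ->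
  {subset F <= F'} -> (n <= n')%N -> e' <= e -> ad_nbhd c F n e x.
Proof.
move=> [hF' [hout hinf]] sub_F hn he; split; [|split].
- by move=> p hp; exact: (qp_close_leq (valP p) hn (hF' p (sub_F _ hp))).
- move=> p hp; have [hp' | /hout //] := boolP (p \in F').
  exact: (qp_close_leq (valP p) (leq0n n') (hF' p hp')).
- exact: lt_le_trans hinf he.
Qed.

End AdeleOrbits.

(* If q1 y and q2 y agree modulo p^L while y is not in p^(L+1) Z_p, then
   v_p(q1 - q2) >= L - v_p(y) >= 0. *)
Lemma qp_smul_close_int p (p_pr : prime p) q1 q2 (y x1 x2 : Qp p) L :
  qp_smul q1 y x1 -> qp_smul q2 y x2 -> qp_close L x1 x2 -> ~ qp_ball y L.+1 0 ->
  pZ p 0 (q1 - q2).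
Proof.
move=> hx1 hx2 hx12 hy.
have [K1 hK1] := pZ_scale_int p_pr q1; have [K2 hK2] := pZ_scale_int p_pr q2.
have hq1 := pZ_scale_int_leq p_pr (leq_maxl K1 K2) hK1.
have hq2 := pZ_scale_int_leq p_pr (leq_maxr K1 K2) hK2.
have [z hz] := qp_ball_ex p_pr y (L.+1 + maxn K1 K2).
have hzL : qp_ball y (L + maxn K1 K2) z by apply: qp_ball_leq hz; rewrite leq_add2r.
have : qp_ball x2 L (q1 * z) by apply/hx12; apply: qp_smul_ball_scaled hx1 hq1 hzL.
rewrite (qp_smulE p_pr hx2 hq2 hzL) -mulrBl => hdz.
have nz : ~ pZ p L.+1 z.
  move=> hz'; apply: hy; rewrite (qp_ballE p_pr _ (qp_ball_leq (leq_addr _ _) hz)).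
  by rewrite sub0r; apply: pZN.
apply: NNPP => hd; apply: nz.
have d0 : q1 - q2 != 0 by apply: contra_not_neq hd => ->; apply: pZ0.
have := pZM p_pr (pZ_inv p_pr hd) hdz.
by rewrite expn0 mul1r mulrA mulVf // mul1r add1n.
Qed.

Lemma qp_nonzero_level p (p_pr : prime p) (x : Qp p) :
  ~ qp_is0 x -> exists M, ~ qp_ball x M 0.
Proof.
move=> hx; apply: NNPP => hM; apply/hx/(qp_is0P p_pr) => n.
by apply: NNPP => hn; apply: hM; exists n.
Qed.

Definition primes_upto (B : nat) : seq prime_t := pmap insub (iota 0 B.+1).

Lemma mem_primes_upto B (p : prime_t) : (p \in primes_upto B) = (val p <= B)%N.
Proof. by rewrite mem_pmap_sub mem_iota leq0n /= add0n ltnS. Qed.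

Lemma uniq_primes_upto B : uniq (primes_upto B).
Proof. exact: pmap_sub_uniq (iota_uniq 0 B.+1). Qed.

Lemma nonzero_level_upto (x : forall p : prime_t, Qp (val p)) B :
  (forall p, ~ qp_is0 (x p)) ->
  exists n, forall p : prime_t, (val p <= B)%N -> ~ qp_ball (x p) n 0.
Proof.
move=> hx; elim: B => [|B [n IH]].
  exists 0%N => p; rewrite leqn0 => /eqP p0.
  by have := prime_gt0 (valP p); rewrite [X in (0 < X)%N]p0.
have [B_pr | B_npr] := boolP (prime B.+1); last first.
  exists n => p; rewrite leq_eqVlt ltnS => /orP [/eqP p_eq | /IH //].
  by move: B_npr; rewrite -p_eq (valP p).
pose pB : prime_t := exist _ B.+1 B_pr.
have [M hM] := qp_nonzero_level B_pr (hx pB).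
exists (maxn n M) => p; rewrite leq_eqVlt ltnS => /orP [/eqP p_eq | /IH hp] hb.
  have p_eqB : p = pB by apply: val_inj.
  by rewrite p_eqB in hb; apply: hM; apply: qp_ball_leq hb; rewrite leq_maxr.
by apply: hp; apply: qp_ball_leq hb; rewrite leq_maxl.
Qed.

Section ClosedOrbit.
Variable R : realType.
Implicit Types a c x : adele R.

Lemma ad_smul_locally_unique a c : ad_invertible a ->
  exists F n e, 0 < e /\ forall q1 q2 x1 x2, ad_smul q1 a x1 -> ad_smul q2 a x2 ->
    ad_nbhd c F n e x1 -> ad_nbhd c F n e x2 -> q1 = q2.
Proof.
move=> [a0 [ainf0 [N hN]]]; have [n hn] := nonzero_level_upto N a0.
set e := `|ad_inf a| / 2.
exists (primes_upto N), n, e; split; first by rewrite divr_gt0 // normr_gt0.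
move=> q1 q2 x1 x2 [hx1 ex1] [hx2 ex2] [c1 [d1 r1]] [c2 [d2 r2]].
apply/eqP; rewrite -subr_eq0; apply/eqP/rat_eq0_of_pZ_all => [l l_pr | ].
  pose pl : prime_t := exist _ l l_pr.
  have [hl | hl] := boolP (pl \in primes_upto N).
    apply: (qp_smul_close_int l_pr (hx1 pl) (hx2 pl)
              (qp_close_trans (c1 _ hl) (qp_close_sym (c2 _ hl)))).
    by move=> hb; apply: (hn pl); [rewrite -mem_primes_upto | apply: qp_ball_leq hb].
  apply: (qp_smul_close_int l_pr (hx1 pl) (hx2 pl)
            (qp_close_trans (d1 _ hl) (qp_close_sym (d2 _ hl)))).
  by apply: (hN pl _).2; rewrite ltnNge -mem_primes_upto.
have : `|ratr (q1 - q2) * ad_inf a| < `|ad_inf a|.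
  have -> : ratr (q1 - q2) * ad_inf a = (ad_inf x1 - ad_inf c) - (ad_inf x2 - ad_inf c).
    by rewrite ex1 ex2 rmorphB /=; ring.
  apply: le_lt_trans (ler_normB _ _) _.
  have -> : `|ad_inf a| = e + e by rewrite /e; field.
  exact: ltrD.
by rewrite normrM -ratr_norm gtr_pMl ?normr_gt0 // -(ltr_rat R) rmorph1.
Qed.

Lemma ad_smul_of_nbhd q a c :
  (forall F n e, 0 < e -> exists x, ad_smul q a x /\ ad_nbhd c F n e x) ->
  ad_smul q a c.
Proof.
move=> hc; split=> [p n r | ].
  have [x [[hx _] [hF _]]] := hc [:: p] n 1 ltr01.
  by rewrite -(hF p (mem_head _ _)); apply: hx.
apply/eqP; rewrite eq_sym -subr_eq0; apply/eqP/norm_lt_all_eq0 => e e_gt0.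
by have [x [[_ <-] [_ [_ hinf]]]] := hc [::] 0%N e e_gt0.
Qed.

Lemma ad_orbit_closed a c : ad_invertible a -> ad_closure (ad_orbit a) c -> ad_orbit a c.
Proof.
move=> ha hc; have [F0 [n0 [e0 [e0_gt0 uniq_q]]]] := ad_smul_locally_unique c ha.
have [x0 [[q0 [q0_neq0 hx0]] hn0]] := hc F0 n0 e0 e0_gt0.
exists q0; split => //; apply: ad_smul_of_nbhd => F n e e_gt0.
have min_gt0 : 0 < Order.min e0 e by rewrite lt_min e0_gt0.
have [x [[q [_ hx]] hn]] := hc (F0 ++ F) (maxn n0 n) (Order.min e0 e) min_gt0.
have sub_F0 : {subset F0 <= F0 ++ F} by move=> p hp; rewrite mem_cat hp.
have sub_F : {subset F <= F0 ++ F} by move=> p hp; rewrite mem_cat hp orbT.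
have hxF0 : ad_nbhd c F0 n0 e0 x.
  by apply: ad_nbhd_weaken hn sub_F0 (leq_maxl _ _) _; rewrite ge_min lexx.
have <- : q = q0 by apply: uniq_q hx hx0 hxF0 hn0.
exists x; split => //.
by apply: ad_nbhd_weaken hn sub_F (leq_maxr _ _) _; rewrite ge_min lexx orbT.
Qed.

End ClosedOrbit.

Section LocalApproximation.
Variable p : nat.
Hypothesis p_pr : prime p.

(* The centre is r / z0, with r in the target ball and z0 an approximation of
   x finer than the valuation of x. *)
Lemma qp_smul_close_target (x w : Qp p) L : ~ qp_is0 x ->
  exists t E, forall q, pZ p E (q - t) -> forall y, qp_smul q x y -> qp_close L y w.
Proof.
move=> x0; have [M hM] := qp_nonzero_level p_pr x0.
have [r hr] := qp_ball_ex p_pr w L; have [W hW] := pZ_scale_int p_pr r.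
have [z0 hz0] := qp_ball_ex p_pr x (L + (M + W)); have [W' hW'] := pZ_scale_int p_pr z0.
have nz0 : ~ pZ p M z0.
  move=> hz; apply: hM; rewrite (qp_ballE p_pr _ (qp_ball_leq _ hz0)); last by lia.
  by rewrite sub0r; apply: pZN.
have z0_neq0 : z0 != 0 by apply: contra_not_neq nz0 => ->; apply: pZ0.
have hinv := pZ_leq (leq0n 1) (pZ_inv p_pr nz0).
exists (r / z0), (L + W')%N => q hq y hy s.
have hqK : pZ p 0 (q * (p ^ (M + W))%N%:R).
  rewrite -(subrK (r / z0) q) mulrDl; apply: (pZD p_pr).
    exact: (pZ_mull_int p_pr (pZ_leq (leq0n _) hq) (pZ_natr p_pr _)).
  have := pZ_mull_int p_pr hW hinv; rewrite expnD natrM.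
  by congr pZ; field.
have hqz : pZ p L (q * z0 - r).
  have -> : q * z0 - r = z0 * (q - r / z0) by field.
  exact: (pZ_mull_scaled p_pr hW' hq).
rewrite (qp_smulE p_pr hy hqK hz0) (qp_ballE p_pr _ hr).
split=> hs; first exact: (pZ_subr_trans p_pr hs hqz).
exact: (pZ_subr_trans p_pr hs (pZ_subr_sym hqz)).
Qed.

Lemma qp_smul_close_is0 (x w y : Qp p) q L :
  qp_is0 x -> qp_is0 w -> qp_smul q x y -> qp_close L y w.
Proof. by move=> x0 w0 hy r; rewrite (qp_smul_is0 p_pr x0 hy) w0. Qed.

Lemma qp_smul_close0 (x w y : Qp p) q K : qp_int w ->
  pZ p 0 (q * (p ^ K)%N%:R) -> qp_ball x K 0 -> qp_smul q x y -> qp_close 0 y w.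
Proof.
move=> hw hq hx hy r.
by rewrite (qp_smulE p_pr hy hq (hx : qp_ball x (0 + K) 0)) mulr0 subr0 hw.
Qed.

End LocalApproximation.

Lemma pZ_crt (good : prime_t -> rat -> Prop) (l : seq prime_t) : uniq l ->
  (forall p, p \in l -> exists t E, forall q, pZ (val p) E (q - t) -> good p q) ->
  exists q (P : nat), (0 < P)%N /\
   (forall p, p \in l -> forall e, pZ (val p) 0 e -> good p (q + P%:R * e)) /\
   (forall p : prime_t, p \notin l -> pZ (val p) 0 q).
Proof.
elim: l => [_ _ | p l IH /andP [pl ul] hl].
  by exists 0, 1%N; split=> //; split=> // p _; apply: (pZ0 (valP p)).
have [q [P [P_gt0 [good_l int_out]]]] :=
  IH ul (fun p' hp' => hl p' (mem_behead (s := p :: l) hp')).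
have [t [E ht]] := hl p (mem_head _ _).
have P0 : (P%:R : rat) != 0 by rewrite pnatr_eq0 -lt0n.
have [h [hh h_int]] := pZ_approx_away (valP p) ((t - q) / P%:R) E.
exists (q + P%:R * h), (P * val p ^ E)%N.
split; first by rewrite muln_gt0 P_gt0 expn_gt0 prime_gt0 ?(valP p).
split=> [p' | p']; last first.
  rewrite inE negb_or => /andP [p'p p'l]; apply: (pZD (valP p') (int_out _ p'l)).
  apply: (pZ_mull_int (valP p') (pZ_natr (valP p') P)).
  by apply: (h_int _ (valP p')); rewrite val_eqE.
rewrite inE => /orP [/eqP -> | hp'] e he.
  apply: ht; have -> : q + P%:R * h + (P * val p ^ E)%N%:R * e - t =
      P%:R * (h - (t - q) / P%:R) + P%:R * ((val p ^ E)%N%:R * e).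
    by rewrite natrM; field.
  apply: (pZD (valP p)); apply: (pZ_mull_int (valP p) (pZ_natr (valP p) P)) => //.
  by have := pZM (valP p) (pZ_expn (valP p) E) he; rewrite addn0.
have p'p : val p' != val p by rewrite val_eqE; apply: contraNneq pl => <-.
rewrite natrM -mulrA -addrA -mulrDr; apply: (good_l _ hp').
apply: (pZD (valP p') (h_int _ (valP p') p'p)).
exact: (pZ_mull_int (valP p') (pZ_natr (valP p') _) he).
Qed.

Lemma real_step_approx (R : archiRealFieldType) (A C h eps : R) : h != 0 -> `|h| < eps ->
  exists k : int, `|A + k%:~R * h - C| < eps /\ `|A + (k + 1)%:~R * h - C| < eps.
Proof.
move=> h0 h_lt; set y := (C - A) / h; exists (Num.floor y).
have y_ge := floor_le y; have y_lt := floorD1_gt y.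
have near_y (k : int) : y - 1 <= k%:~R <= y + 1 -> `|A + k%:~R * h - C| < eps.
  move=> hk; have -> : A + k%:~R * h - C = h * (k%:~R - y) by rewrite /y; field.
  rewrite normrM; apply: le_lt_trans h_lt; rewrite ler_piMr ?normr_ge0 //.
  by rewrite ler_norml; apply/andP; split; lra.
by split; apply: near_y; rewrite ?rmorphD /=; apply/andP; split; lra.
Qed.

Definition ad_close_at (R : realType) (a c : adele R) n (p : prime_t) q :=
  forall y, qp_smul q (ad_fin a p) y -> qp_close n y (ad_fin c p).

Section Density.
Variable R : realType.
Implicit Types a c x : adele R.

Lemma ad_nbhd_scale a c F n eps q B :
  (forall p : prime_t, p \in F -> (val p <= B)%N) ->
  (forall p : prime_t, (B < val p)%N -> qp_int (ad_fin c p)) ->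
  (forall p : prime_t, (val p <= B)%N -> ad_close_at a c n p q) ->
  (forall p : prime_t, (B < val p)%N ->
     exists K, pZ (val p) 0 (q * (val p ^ K)%N%:R) /\ qp_ball (ad_fin a p) K 0) ->
  `|ratr q * ad_inf a - ad_inf c| < eps ->
  ad_nbhd c F n eps (ad_scale q a).
Proof.
move=> F_le c_int close_le bounded_gt hinf; split; [|split] => // [p hp | p _].
  exact: close_le (F_le _ hp) _ (qp_scaleP _ _ _).
have [p_le | p_gt] := leqP (val p) B.
  exact: (qp_close_leq (valP p) (leq0n n) (close_le _ p_le _ (qp_scaleP _ _ _))).
have [K [hK hb]] := bounded_gt p p_gt.
exact: (qp_smul_close0 (valP p) (c_int p p_gt) hK hb (qp_scaleP _ _ _)).
Qed.

Lemma ad_noninvertible_witness a B m : ~ ad_invertible a -> ad_inf a != 0 ->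
  (forall p : prime_t, (B < val p)%N -> qp_int (ad_fin a p)) ->
  exists (s : prime_t) j, (m < val s ^ j)%N /\ qp_ball (ad_fin a s) j 0 /\
    (qp_is0 (ad_fin a s) \/ (B < val s)%N).
Proof.
move=> a_ninv ainf0 a_int.
have [[s s0] | nz] := classic (exists s, qp_is0 (ad_fin a s)).
  exists s, m; split; first exact: (ltn_expl m (prime_gt1 (valP s))).
  by split; [exact: ((qp_is0P (valP s) _).1 s0 m) | left].
have [s [s_gt s_nunit]] : exists s : prime_t, (B + m < val s)%N /\ ~ qp_unit (ad_fin a s).
  apply: NNPP => no_s; apply: a_ninv; split=> [p p0 | ]; first by apply: nz; exists p.
  split=> //; exists (B + m)%N => p hp; apply: NNPP => hu; apply: no_s; by exists p.
exists s, 1%N; split; first by rewrite expn1; lia.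
split; last by right; lia.
by apply: NNPP => hb; apply: s_nunit; split=> //; apply: a_int; lia.
Qed.

Section Approximation.
Variables (a c : adele R) (F : seq prime_t) (n : nat) (eps : R) (B : nat).
Variables (q0 : rat) (P : nat).
Hypotheses (zeros_ac : ad_zeros_sub a c) (eps_gt0 : 0 < eps).
Hypothesis F_le : forall p : prime_t, p \in F -> (val p <= B)%N.
Hypotheses (a_int : forall p : prime_t, (B < val p)%N -> qp_int (ad_fin a p))
  (c_int : forall p : prime_t, (B < val p)%N -> qp_int (ad_fin c p)).
Hypotheses (P_gt0 : (0 < P)%N)
  (q0_close : forall p : prime_t, (val p <= B)%N -> forall e, pZ (val p) 0 e ->
     ad_close_at a c n p (q0 + P%:R * e))
  (q0_int : forall p : prime_t, (B < val p)%N -> pZ (val p) 0 q0).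

Lemma ad_orbit_meets_nbhd q : q != 0 ->
  (forall p : prime_t, (val p <= B)%N -> ad_close_at a c n p q) ->
  (forall p : prime_t, (B < val p)%N ->
     exists K, pZ (val p) 0 (q * (val p ^ K)%N%:R) /\ qp_ball (ad_fin a p) K 0) ->
  `|ratr q * ad_inf a - ad_inf c| < eps ->
  exists x, ad_orbit a x /\ ad_nbhd c F n eps x.
Proof.
move=> q_neq0 close_le bounded_gt hinf; exists (ad_scale q a); split.
  by exists q; split => //; apply: ad_scaleP.
exact: ad_nbhd_scale F_le c_int close_le bounded_gt hinf.
Qed.

Lemma ad_orbit_meets_nbhd_inf0 : ad_inf a = 0 ->
  exists x, ad_orbit a x /\ ad_nbhd c F n eps x.
Proof.
move=> ainf0; pose e : int := (q0 == 0).
have q_neq0 : q0 + P%:R * e%:~R != 0.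
  rewrite /e; have [-> | q0_neq0] := eqVneq q0 0; last by rewrite mulr0 addr0.
  by rewrite add0r mulr1 pnatr_eq0 -lt0n.
apply: ad_orbit_meets_nbhd q_neq0 _ _ _ => [p p_le | p p_gt | ].
- exact: q0_close p_le _ (pZ_intr (valP p) e).
- exists 0%N; split; last by apply/(a_int p_gt); apply: pZ0 (valP p) 0.
  rewrite mulr1; apply: (pZD (valP p) (q0_int p_gt)).
  exact: (pZ_mull_int (valP p) (pZ_natr (valP p) P) (pZ_intr (valP p) e)).
- by rewrite ainf0 mulr0 (zeros_ac.2 ainf0) subrr normr0.
Qed.

Section AuxiliaryPrime.
Variables (s : prime_t) (j : nat).
Hypotheses (s_ball : qp_ball (ad_fin a s) j 0)
  (s_cases : qp_is0 (ad_fin a s) \/ (B < val s)%N).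

Lemma ad_close_at_shift (k : int) (p : prime_t) : (val p <= B)%N ->
  ad_close_at a c n p (q0 + P%:R * (k%:~R / (val s ^ j)%N%:R)).
Proof.
move=> p_le; have [a0 | a0] := classic (qp_is0 (ad_fin a p)).
  by move=> y hy; exact: (qp_smul_close_is0 (valP p) n a0 (zeros_ac.1 p a0) hy).
have p_neq_s : val p != val s.
  apply: contra_not_neq a0 => /val_inj p_eq; rewrite p_eq.
  by case: s_cases => // s_gt; move: p_le; rewrite p_eq leqNgt s_gt.
exact: q0_close p_le _ (pZ0_div_expn k j (valP p) (valP s) p_neq_s).
Qed.

Lemma ad_bounded_shift (k : int) (p : prime_t) : (B < val p)%N ->
  exists K, pZ (val p) 0 ((q0 + P%:R * (k%:~R / (val s ^ j)%N%:R)) * (val p ^ K)%N%:R) /\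
    qp_ball (ad_fin a p) K 0.
Proof.
move=> p_gt; case: (eqVneq p s) p_gt => [-> | p_neq] p_gt.
  exists j; split => //.
  have -> : (q0 + P%:R * (k%:~R / (val s ^ j)%N%:R)) * (val s ^ j)%N%:R =
      q0 * (val s ^ j)%N%:R + P%:R * k%:~R by field; rewrite (pexpn_neq0 (valP s)).
  apply: (pZD (valP s)).
    exact: (pZ_mull_int (valP s) (q0_int p_gt) (pZ_natr (valP s) _)).
  exact: (pZ_mull_int (valP s) (pZ_natr (valP s) _) (pZ_intr (valP s) k)).
exists 0%N; split; last by apply/(a_int p_gt); apply: pZ0 (valP p) 0.
rewrite expn0 mulr1; apply: (pZD (valP p) (q0_int p_gt)).
apply: (pZ_mull_int (valP p) (pZ_natr (valP p) _)).
by apply: pZ0_div_expn (valP p) (valP s) _; rewrite val_eqE.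
Qed.

End AuxiliaryPrime.

Lemma ad_orbit_meets_nbhd_noninvertible : ~ ad_invertible a -> ad_inf a != 0 ->
  exists x, ad_orbit a x /\ ad_nbhd c F n eps x.
Proof.
move=> a_ninv ainf0; set X : R := P%:R * `|ad_inf a| / eps.
have X_ge0 : 0 <= X by rewrite /X divr_ge0 ?mulr_ge0 ?normr_ge0 // ltW.
have [s [j [s_big [s_ball s_cases]]]] :=
  ad_noninvertible_witness (Num.Def.archi_bound X) a_ninv ainf0 a_int.
set T := (val s ^ j)%N; have T_gt0 : (0 < T)%N by rewrite expn_gt0 prime_gt0 ?(valP s).
pose qk (k : int) := q0 + P%:R * (k%:~R / T%:R).
set h : R := P%:R / T%:R * ad_inf a.
have h_neq0 : h != 0 by rewrite !mulf_neq0 ?invr_eq0 ?pnatr_eq0 -?lt0n.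
have h_lt : `|h| < eps.
  have X_lt : X < T%:R by apply: lt_trans (archi_boundP X_ge0) _; rewrite ltr_nat.
  rewrite /h normrM ger0_norm ?divr_ge0 // mulrAC ltr_pdivrMr ?ltr0n //.
  have -> : P%:R * `|ad_inf a| = X * eps by rewrite /X divfK ?gt_eqF.
  by rewrite mulrC ltr_pM2l.
have ratr_qk (k : int) : ratr (qk k) * ad_inf a = ratr q0 * ad_inf a + k%:~R * h.
  by rewrite /qk /h rmorphD rmorphM /= fmorph_div /= ratr_int !ratr_nat; ring.
have meets (k : int) : qk k != 0 -> `|ratr q0 * ad_inf a + k%:~R * h - ad_inf c| < eps ->
    exists x, ad_orbit a x /\ ad_nbhd c F n eps x.
  move=> qk_neq0 hk; rewrite -ratr_qk in hk.
  exact: ad_orbit_meets_nbhd qk_neq0 (@ad_close_at_shift s j s_cases k)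
    (ad_bounded_shift s_ball k) hk.
have [k [hk hk1]] := real_step_approx (ratr q0 * ad_inf a) (ad_inf c) h_neq0 h_lt.
have [qk0 | qk_neq0] := eqVneq (qk k) 0; last exact: meets qk_neq0 hk.
apply: meets hk1; have -> : qk (k + 1) = qk k + P%:R / T%:R by rewrite /qk rmorphD /=; ring.
by rewrite qk0 add0r mulf_neq0 ?invr_eq0 ?pnatr_eq0 -?lt0n.
Qed.

End Approximation.
End Density.

Lemma ad_restricted_bound (R : realType) (a c : adele R) (F : seq prime_t) :
  exists B, [/\ forall p : prime_t, p \in F -> (val p <= B)%N,
    forall p : prime_t, (B < val p)%N -> qp_int (ad_fin a p) &
    forall p : prime_t, (B < val p)%N -> qp_int (ad_fin c p)].
Proof.
have [Na a_int] := ad_restricted a; have [Nc c_int] := ad_restricted c.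
exists (maxn (maxn Na Nc) (\max_(p <- F) val p)); split=> p hp.
- by rewrite leq_max (@leq_bigmax_seq _ F xpredT _ p hp) ?orbT.
- by apply: a_int; apply: leq_ltn_trans hp; rewrite !leq_max leqnn.
- by apply: c_int; apply: leq_ltn_trans hp; rewrite !leq_max leqnn !orbT.
Qed.

Lemma ad_closure_orbit_noninvertible (R : realType) (a c : adele R) :
  ~ ad_invertible a -> ad_zeros_sub a c -> ad_closure (ad_orbit a) c.
Proof.
move=> a_ninv zeros_ac F n eps eps_gt0.
have [B [F_le a_int c_int]] := ad_restricted_bound a c F.
have targets (p : prime_t) : p \in primes_upto B ->
    exists t E, forall q, pZ (val p) E (q - t) -> ad_close_at a c n p q.
  move=> _; have [a0 | a0] := classic (qp_is0 (ad_fin a p)).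
    exists 0, 0%N => q _ y hy.
    exact: (qp_smul_close_is0 (valP p) n a0 (zeros_ac.1 p a0) hy).
  exact: qp_smul_close_target (valP p) _ _ n a0.
have [q0 [P [P_gt0 [q0_close q0_int]]]] := pZ_crt (uniq_primes_upto B) targets.
have q0_close' (p : prime_t) : (val p <= B)%N -> forall e, pZ (val p) 0 e ->
    ad_close_at a c n p (q0 + P%:R * e).
  by rewrite -mem_primes_upto; apply: q0_close.
have q0_int' (p : prime_t) : (B < val p)%N -> pZ (val p) 0 q0.
  by move=> hp; apply: q0_int; rewrite mem_primes_upto -ltnNge.
have [ainf0 | ainf0] := eqVneq (ad_inf a) 0.
  exact: ad_orbit_meets_nbhd_inf0 zeros_ac eps_gt0 F_le a_int c_int P_gt0
    q0_close' q0_int' ainf0.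
exact: ad_orbit_meets_nbhd_noninvertible zeros_ac eps_gt0 F_le a_int c_int P_gt0
  q0_close' q0_int' a_ninv ainf0.
Qed.

Theorem proposition3p3 (R : realType) (a : adele R) :
  (ad_invertible a ->
     forall b : adele R, quasi_orbit a b <-> ad_orbit a b) /\
  (~ ad_invertible a ->
     forall b : adele R, quasi_orbit a b <->
       (~ ad_invertible b /\
        (forall p : prime_t, qp_is0 (ad_fin b p) <-> qp_is0 (ad_fin a p)) /\
        (ad_inf b = 0 <-> ad_inf a = 0))).
Proof.
have closure_orbit (x y : adele R) : quasi_orbit x y -> ad_closure (ad_orbit x) y.
  by move=> hxy; apply/hxy/ad_closure_self/ad_orbit_refl.
split=> [a_inv b | a_ninv b].
  split=> [hab | ]; last exact: quasi_orbit_of_orbit.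
  exact: ad_orbit_closed a_inv (closure_orbit _ _ hab).
split=> [hab | ].
- have hba : quasi_orbit b a by move=> c; rewrite hab.
  have [zeros_ab inf_ab] := ad_closure_orbit_zeros (closure_orbit _ _ hab).
  have [zeros_ba inf_ba] := ad_closure_orbit_zeros (closure_orbit _ _ hba).
  split=> [b_inv | ]; last by split=> [p | ]; split; auto.
  apply/a_ninv/(ad_invertible_orbit _ b_inv).
  exact: ad_orbit_closed b_inv (closure_orbit _ _ hba).
- move=> [b_ninv [zeros_ab inf_ab]] c.
  split=> /ad_closure_orbit_zeros [zeros_c inf_c].
    apply: ad_closure_orbit_noninvertible a_ninv _.
    by split=> [p /(zeros_ab p).2/zeros_c | /inf_ab.2/inf_c].
  apply: ad_closure_orbit_noninvertible b_ninv _.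
  by split=> [p /(zeros_ab p).1/zeros_c | /inf_ab.1/inf_c].
Qed.
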